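(* Let $S$ be a self-adjoint subspace in $X^2$, and let $A$ and $S+A$ be closed Hermitian subspaces in $X^2$, with $D(S)\subset D(A)$. Let $Q:A(0)^\perp\to S(0)^\perp$ be the orthogonal projection. If $QA_s$ is $S_s$-compact, then $S+A$ is a self-adjoint subspace in $X^2$.
   Context: $X$ is a complex Hilbert space and $X^2=X\times X$ carries the inner product $\langle (x,f),(y,g)\rangle=\langle x,y\rangle+\langle f,g\rangle$. A subspace $T$ in $X^2$ means a linear subspace of $X^2$ (a linear relation); a linear operator in $X$ is identified with its graph. Notation: $D(T)=\{x:(x,f)\in T \text{ for some } f\}$, $T(x)=\{f:(x,f)\in T\}$. The adjoint is $T^*=\{(y,g)\in X^2:\langle g,x\rangle=\langle y,f\rangle \text{ for all }(x,f)\in T\}$; $T$ is Hermitian if $T\subset T^*$ and self-adjoint if $T=T^*$. For subspaces $S,A$ in $X^2$, $S+A=\{(x,f+g):(x,f)\in S,(x,g)\in A\}$. For a closed subspace $T$, set $T_\infty=\{(0,g)\in X^2:(0,g)\in T\}$ and $T_s=T\ominus T_\infty$ (orthogonal complement of $T_\infty$ in $T$), so $T=T_s\oplus T_\infty$; $T_s$ is the graph of a linear operator (the operator part of $T$) with $D(T_s)=D(T)$ and $R(T_s)\subset T(0)^\perp$. For linear operators $U,V$ in $X$ with $D(V)\subset D(U)$: $U$ is $V$-compact if $U|_{D(V)}$ is compact as a map from $(D(V),\|\cdot\|_V)$ into $X$, where $\|x\|_V=\|x\|+\|Vx\|$. *)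

From Stdlib Require Import Reals.
Open Scope R_scope.

Record Cx := mkC { re : R; im : R }.
Definition C0 : Cx := mkC 0 0.
Definition C1 : Cx := mkC 1 0.
Definition Cadd (a b : Cx) : Cx := mkC (re a + re b) (im a + im b).
Definition Cmul (a b : Cx) : Cx :=
  mkC (re a * re b - im a * im b) (re a * im b + im a * re b).
Definition Cconj (a : Cx) : Cx := mkC (re a) (- im a).

Record HilbertSpace := {
  carrier :> Type;
  vzero : carrier;
  vadd : carrier -> carrier -> carrier;
  vopp : carrier -> carrier;
  vscal : Cx -> carrier -> carrier;
  inner : carrier -> carrier -> Cx;
  vadd_assoc : forall x y z, vadd x (vadd y z) = vadd (vadd x y) z;
  vadd_comm : forall x y, vadd x y = vadd y x;
  vadd_zero : forall x, vadd x vzero = x;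
  vadd_opp : forall x, vadd x (vopp x) = vzero;
  vscal_one : forall x, vscal C1 x = x;
  vscal_mul : forall a b x, vscal a (vscal b x) = vscal (Cmul a b) x;
  vscal_addv : forall a x y, vscal a (vadd x y) = vadd (vscal a x) (vscal a y);
  vscal_adds : forall a b x, vscal (Cadd a b) x = vadd (vscal a x) (vscal b x);
  inner_addl : forall x y z, inner (vadd x y) z = Cadd (inner x z) (inner y z);
  inner_scall : forall a x y, inner (vscal a x) y = Cmul a (inner x y);
  inner_conj : forall x y, inner y x = Cconj (inner x y);
  inner_pos : forall x, 0 <= re (inner x x);
  inner_def : forall x, re (inner x x) = 0 -> x = vzero;
  complete : forall u : nat -> carrier,
    (forall eps, eps > 0 -> exists N, forall m n, (N <= m)%nat -> (N <= n)%nat ->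
        sqrt (re (inner (vadd (u m) (vopp (u n))) (vadd (u m) (vopp (u n))))) < eps) ->
    exists l, forall eps, eps > 0 -> exists N, forall n, (N <= n)%nat ->
        sqrt (re (inner (vadd (u n) (vopp l)) (vadd (u n) (vopp l)))) < eps
}.

Arguments vzero {h}.
Arguments vadd {h}.
Arguments vopp {h}.
Arguments vscal {h}.
Arguments inner {h}.

Section Defs.
Variable X : HilbertSpace.

Definition vsub (x y : X) : X := vadd x (vopp y).
Definition norm (x : X) : R := sqrt (re (inner x x)).

Definition converges_to (u : nat -> X) (l : X) : Prop :=
  forall eps, eps > 0 -> exists N, forall n, (N <= n)%nat -> norm (vsub (u n) l) < eps.

(** A subspace in X^2 (linear relation), represented by its membership predicate. *)
Definition relation2 := X -> X -> Prop.

Definition is_subspace (T : relation2) : Prop :=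
  T vzero vzero /\
  (forall x f y g, T x f -> T y g -> T (vadd x y) (vadd f g)) /\
  (forall a x f, T x f -> T (vscal a x) (vscal a f)).

(** closedness in X^2 with the product norm: equivalently componentwise convergence *)
Definition is_closed (T : relation2) : Prop :=
  forall (x f : nat -> X) (y g : X),
    (forall n, T (x n) (f n)) -> converges_to x y -> converges_to f g -> T y g.

Definition dom (T : relation2) (x : X) : Prop := exists f, T x f.
Definition img_at (T : relation2) (x : X) (f : X) : Prop := T x f.

Definition adjoint (T : relation2) : relation2 :=
  fun y g => forall x f, T x f -> inner g x = inner y f.

Definition hermitian (T : relation2) : Prop :=
  forall x f, T x f -> adjoint T x f.

Definition self_adjoint (T : relation2) : Prop :=
  forall x f, T x f <-> adjoint T x f.

Definition rel_sum (S A : relation2) : relation2 :=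
  fun x h => exists f g, S x f /\ A x g /\ h = vadd f g.

Definition perp (M : X -> Prop) : X -> Prop :=
  fun y => forall z, M z -> inner y z = C0.

(** T_∞ = {(0,g) ∈ T} and T_s = T ⊖ T_∞, i.e. the elements of T orthogonal
    (in X^2) to every (0,g) ∈ T. *)
Definition T_infty (T : relation2) : relation2 :=
  fun x g => x = vzero /\ T x g.

Definition op_part (T : relation2) : relation2 :=
  fun x f => T x f /\
    (forall y g, T_infty T y g -> Cadd (inner x y) (inner f g) = C0).

Definition orth_proj (M : X -> Prop) : relation2 :=
  fun x y => M y /\ perp M (vsub x y).

Definition rel_comp (U V : relation2) : relation2 :=
  fun x h => exists f, V x f /\ U f h.

(** U is V-compact (for operators U, V given by graphs with D(V) ⊂ D(U)):
    U restricted to D(V) is compact from (D(V), ‖·‖_V) into X, i.e. every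
    ‖·‖_V-bounded sequence in D(V) has a subsequence whose U-image converges
    in X. *)
Definition rel_compact (U V : relation2) : Prop :=
  forall (x v u : nat -> X) (M : R),
    (forall n, V (x n) (v n)) ->
    (forall n, U (x n) (u n)) ->
    (forall n, norm (x n) + norm (v n) <= M) ->
    exists (phi : nat -> nat) (l : X),
      (forall n, (phi n < phi (S n))%nat) /\
      converges_to (fun n => u (phi n)) l.

End Defs.

Arguments vsub {X}.
Arguments norm {X}.
Arguments converges_to {X}.
Arguments is_subspace {X}.
Arguments is_closed {X}.
Arguments dom {X}.
Arguments img_at {X}.
Arguments adjoint {X}.
Arguments hermitian {X}.
Arguments self_adjoint {X}.
Arguments rel_sum {X}.
Arguments perp {X}.
Arguments T_infty {X}.
Arguments op_part {X}.
Arguments orth_proj {X}.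
Arguments rel_comp {X}.
Arguments rel_compact {X}.

(** A self-adjoint [S] makes [S - i s] (s real, nonzero) a bijection of its graph onto [X],
    with [|s| |x| <= |f - i s x|] for [(x, f)] in [S].  Put [K_s = Q A_s (S - i s)^{-1}].
    If [|K_s| >= 1/2] for arbitrarily large [|s|], normalised witnesses [u] give
    [x = (S - i s)^{-1} u -> 0] with [S_s x] bounded, so by [S_s]-compactness [K_s u]
    has a convergent subsequence; its limit is orthogonal to [D(S)] because [A] is
    Hermitian, hence lies in [S(0)] and in [S(0)^⊥], so it is [0], contradicting
    [|K_s u| > 1/2].  Once [|K_s| <= 1/2], the fixed point of [u |-> y - K_s u] yields
    [(x, y + i s x)] in [S + A], so [S + A - i s] is onto for [s = ± N]; a Hermitian
    relation with both ranges full is self-adjoint. *)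

From Pilot Require Import Defs.
From Stdlib Require Import Reals Lra Lia Psatz ClassicalEpsilon.
Open Scope R_scope.

Lemma Cx_ext (a b : Cx) : re a = re b -> im a = im b -> a = b.
Proof. destruct a, b; simpl; intros; subst; reflexivity. Qed.

Definition Copp (a : Cx) : Cx := mkC (- re a) (- im a).
Definition Creal (c : R) : Cx := mkC c 0.
Definition Cimag (c : R) : Cx := mkC 0 c.
Definition nsq {X : HilbertSpace} (x : X) : R := re (inner x x).

Section VectorAlgebra.
Context {X : HilbertSpace}.
Implicit Types x y z a b c d : X.

Lemma vadd_0l x : vadd vzero x = x.
Proof. rewrite vadd_comm. apply vadd_zero. Qed.

Lemma vadd_oppl x : vadd (vopp x) x = vzero.
Proof. rewrite vadd_comm. apply vadd_opp. Qed.

Lemma vadd_cancel a x y : vadd a x = vadd a y -> x = y.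
Proof.
  intro H. rewrite <- (vadd_0l x), <- (vadd_0l y), <- (vadd_oppl a).
  rewrite <- !vadd_assoc, H. reflexivity.
Qed.

Lemma vopp_unique x y : vadd x y = vzero -> y = vopp x.
Proof. intro H. apply (vadd_cancel x). rewrite H, vadd_opp. reflexivity. Qed.

Lemma vscal_C0 x : vscal C0 x = vzero.
Proof.
  apply (vadd_cancel (vscal C0 x)). rewrite vadd_zero, <- vscal_adds.
  f_equal. apply Cx_ext; simpl; lra.
Qed.

Lemma vscal_v0 (a : Cx) : vscal a (@vzero X) = vzero.
Proof.
  apply (vadd_cancel (vscal a vzero)).
  rewrite vadd_zero, <- vscal_addv, vadd_zero. reflexivity.
Qed.

Lemma vscal_m1 x : vscal (Creal (-1)) x = vopp x.
Proof.
  apply vopp_unique. rewrite <- (vscal_one _ x) at 1. rewrite <- vscal_adds.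
  replace (Cadd Defs.C1 (Creal (-1))) with C0 by (apply Cx_ext; simpl; lra).
  apply vscal_C0.
Qed.

Lemma vopp_opp x : vopp (vopp x) = x.
Proof. symmetry. apply vopp_unique. apply vadd_oppl. Qed.

Lemma vopp0 : vopp (@vzero X) = vzero.
Proof. symmetry. apply vopp_unique. apply vadd_zero. Qed.

Lemma vadd_AC a b c : vadd a (vadd b c) = vadd b (vadd a c).
Proof. rewrite !vadd_assoc, (vadd_comm _ a b). reflexivity. Qed.

Lemma vadd_swap4 a b c d : vadd (vadd a b) (vadd c d) = vadd (vadd a c) (vadd b d).
Proof. rewrite <- !vadd_assoc. f_equal. apply vadd_AC. Qed.

Lemma vopp_add x y : vopp (vadd x y) = vadd (vopp x) (vopp y).
Proof.
  symmetry. apply vopp_unique. rewrite vadd_swap4, !vadd_opp, vadd_zero. reflexivity.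
Qed.

Lemma vscal_opp (a : Cx) x : vscal a (vopp x) = vopp (vscal a x).
Proof. apply vopp_unique. rewrite <- vscal_addv, vadd_opp. apply vscal_v0. Qed.

Lemma vsub_self x : vsub x x = vzero.
Proof. apply vadd_opp. Qed.

Lemma vsub_0r x : vsub x vzero = x.
Proof. unfold vsub. rewrite vopp0. apply vadd_zero. Qed.

Lemma vsub_0l x : vsub vzero x = vopp x.
Proof. apply vadd_0l. Qed.

Lemma vsub_sub4 a b c d : vsub (vsub a b) (vsub c d) = vsub (vsub a c) (vsub b d).
Proof. unfold vsub. rewrite !vopp_add, !vopp_opp. apply vadd_swap4. Qed.

Lemma vadd_sub4 a b c d : vsub (vadd a b) (vadd c d) = vadd (vsub a c) (vsub b d).
Proof. unfold vsub. rewrite vopp_add. apply vadd_swap4. Qed.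

Lemma vsub_eq0 x y : vsub x y = vzero -> x = y.
Proof.
  intro H. apply vopp_unique in H. rewrite <- (vopp_opp x), <- H, vopp_opp. reflexivity.
Qed.

Lemma vadd_sub_cancel x y : vadd y (vsub x y) = x.
Proof. unfold vsub. rewrite vadd_AC, vadd_opp, vadd_zero. reflexivity. Qed.



Lemma vopp_sub x y : vopp (vsub x y) = vsub y x.
Proof. unfold vsub. rewrite vopp_add, vopp_opp. apply vadd_comm. Qed.

Lemma vsub_chain x y z : vsub x z = vadd (vsub x y) (vsub y z).
Proof.
  unfold vsub. rewrite <- vadd_assoc. f_equal.
  rewrite vadd_assoc, vadd_oppl, vadd_0l. reflexivity.
Qed.

Lemma vscal_sub (a : Cx) x y : vscal a (vsub x y) = vsub (vscal a x) (vscal a y).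
Proof. unfold vsub. rewrite vscal_addv, vscal_opp. reflexivity. Qed.

Lemma vscal_mulC (a b : Cx) x : vscal a (vscal b x) = vscal b (vscal a x).
Proof. rewrite !vscal_mul. f_equal. apply Cx_ext; simpl; ring. Qed.

Lemma vsub_addl x y z : vsub (vadd x y) z = vadd (vsub x z) y.
Proof. unfold vsub. rewrite <- !vadd_assoc, (vadd_comm _ y). reflexivity. Qed.

Lemma vadd_sub_sub x y z : vadd (vsub x (vsub y z)) y = vadd x z.
Proof.
  unfold vsub. rewrite vopp_add, vopp_opp, <- !vadd_assoc. f_equal.
  rewrite (vadd_comm _ z y), vadd_assoc, vadd_oppl. apply vadd_0l.
Qed.

End VectorAlgebra.

Section InnerProduct.
Context {X : HilbertSpace}.
Implicit Types x y z w : X.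

Lemma inner_addr x y z : inner z (vadd x y) = Cadd (inner z x) (inner z y).
Proof.
  rewrite (inner_conj _ (vadd x y) z), inner_addl, (inner_conj _ x z), (inner_conj _ y z).
  apply Cx_ext; simpl; lra.
Qed.

Lemma inner_scalr (a : Cx) x y : inner x (vscal a y) = Cmul (Cconj a) (inner x y).
Proof.
  rewrite (inner_conj _ (vscal a y) x), inner_scall, (inner_conj _ y x).
  apply Cx_ext; simpl; lra.
Qed.

Lemma inner_0l y : inner vzero y = C0.
Proof. rewrite <- (vscal_C0 y) at 1. rewrite inner_scall. apply Cx_ext; simpl; lra. Qed.

Lemma inner_0r y : inner y vzero = C0.
Proof. rewrite inner_conj, inner_0l. apply Cx_ext; simpl; lra. Qed.

Lemma inner_oppl x y : inner (vopp x) y = Copp (inner x y).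
Proof. rewrite <- vscal_m1, inner_scall. apply Cx_ext; simpl; lra. Qed.

Lemma inner_oppr x y : inner y (vopp x) = Copp (inner y x).
Proof. rewrite <- vscal_m1, inner_scalr. apply Cx_ext; simpl; lra. Qed.

Lemma inner_subl x y z : inner (vsub x y) z = Cadd (inner x z) (Copp (inner y z)).
Proof. unfold vsub. rewrite inner_addl, inner_oppl. reflexivity. Qed.

Lemma inner_subr x y z : inner z (vsub x y) = Cadd (inner z x) (Copp (inner z y)).
Proof. unfold vsub. rewrite inner_addr, inner_oppr. reflexivity. Qed.


Lemma im_inner_self x : im (inner x x) = 0.
Proof. pose proof (f_equal im (inner_conj _ x x)) as E. simpl in E. lra. Qed.

Lemma re_inner_sym x y : re (inner y x) = re (inner x y).
Proof. rewrite inner_conj. reflexivity. Qed.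

Lemma im_inner_sym x y : im (inner y x) = - im (inner x y).
Proof. rewrite inner_conj. reflexivity. Qed.

Lemma nsq_ge0 x : 0 <= nsq x.
Proof. apply inner_pos. Qed.

Lemma nsq_eq0 x : nsq x <= 0 -> x = vzero.
Proof. intro H. apply inner_def. pose proof (nsq_ge0 x). unfold nsq in *. lra. Qed.

Lemma nsq_0 : nsq (@vzero X) = 0.
Proof. unfold nsq. rewrite inner_0l. reflexivity. Qed.

Lemma nsq_add x y : nsq (vadd x y) = nsq x + nsq y + 2 * re (inner x y).
Proof.
  unfold nsq. rewrite inner_addl, !inner_addr. simpl. rewrite (re_inner_sym x y). lra.
Qed.

Lemma nsq_sub x y : nsq (vsub x y) = nsq x + nsq y - 2 * re (inner x y).
Proof. unfold vsub. rewrite nsq_add. unfold nsq. rewrite inner_oppl, !inner_oppr. simpl. lra. Qed.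

Lemma nsq_scal (a : Cx) x : nsq (vscal a x) = (re a * re a + im a * im a) * nsq x.
Proof.
  unfold nsq. rewrite inner_scall, inner_scalr. simpl. rewrite im_inner_self. ring.
Qed.

Lemma parallelogram x y : nsq (vadd x y) + nsq (vsub x y) = 2 * nsq x + 2 * nsq y.
Proof. rewrite nsq_add, nsq_sub. ring. Qed.

Lemma re_inner_sq_le x y : re (inner x y) * re (inner x y) <= nsq x * nsq y.
Proof.
  set (b := re (inner x y)). set (a := nsq y). set (c := nsq x).
  destruct (Req_dec a 0) as [Ha|Ha].
  - apply Req_le, nsq_eq0 in Ha. unfold b. rewrite Ha, inner_0r. simpl.
    pose proof (nsq_ge0 x). pose proof (nsq_ge0 y). unfold a, c. nra.
  - (* minimise [nsq (x + t y)] at [t = - b / a] *)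
    assert (Hapos : 0 < a) by (pose proof (nsq_ge0 y); unfold a in *; lra).
    set (t := - b / a).
    pose proof (nsq_ge0 (vadd x (vscal (Creal t) y))) as H.
    rewrite nsq_add, nsq_scal, inner_scalr in H. simpl in H. fold a c in H.
    assert (Ht : a * (c + t * t * a + 2 * t * b) = a * c - b * b)
      by (unfold t; field; exact Ha).
    assert (0 <= a * (c + t * t * a + 2 * t * b)) by (apply Rmult_le_pos; unfold b; lra).
    nra.
Qed.

Lemma norm_ge0 x : 0 <= norm x.
Proof. apply sqrt_pos. Qed.

Lemma norm_sq x : norm x * norm x = nsq x.
Proof. apply sqrt_sqrt, nsq_ge0. Qed.

Lemma norm_eq0 x : norm x = 0 -> x = vzero.
Proof. intro H. apply nsq_eq0. rewrite <- norm_sq, H. lra. Qed.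

Lemma norm_0 : norm (@vzero X) = 0.
Proof. unfold norm. fold (@nsq X vzero). rewrite nsq_0. apply sqrt_0. Qed.

Lemma norm_le_nsq x y : nsq x <= nsq y -> norm x <= norm y.
Proof. apply sqrt_le_1_alt. Qed.

Lemma nsq_lt_norm x (r : R) : norm x < r -> nsq x < r * r.
Proof. intro H. rewrite <- norm_sq. pose proof (norm_ge0 x). nra. Qed.

Lemma norm_lt_nsq x (r : R) : 0 < r -> nsq x < r * r -> norm x < r.
Proof.
  intros Hr H. destruct (Rlt_or_le (norm x) r) as [|Hle]; auto.
  rewrite <- norm_sq in H. nra.
Qed.

Lemma norm_scal (a : Cx) x : norm (vscal a x) = sqrt (re a * re a + im a * im a) * norm x.
Proof.
  unfold norm. fold (nsq (vscal a x)) (nsq x). rewrite nsq_scal.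
  apply sqrt_mult; [nra | apply nsq_ge0].
Qed.

Lemma norm_Creal (c : R) x : norm (vscal (Creal c) x) = Rabs c * norm x.
Proof.
  rewrite norm_scal. simpl. replace (c * c + 0 * 0) with (Rsqr c) by (unfold Rsqr; ring).
  rewrite sqrt_Rsqr_abs. reflexivity.
Qed.

Lemma norm_Cimag (c : R) x : norm (vscal (Cimag c) x) = Rabs c * norm x.
Proof.
  rewrite norm_scal. simpl. replace (0 * 0 + c * c) with (Rsqr c) by (unfold Rsqr; ring).
  rewrite sqrt_Rsqr_abs. reflexivity.
Qed.

Lemma norm_opp x : norm (vopp x) = norm x.
Proof. rewrite <- vscal_m1, norm_Creal, Rabs_left by lra. ring. Qed.

Lemma norm_sub_sym x y : norm (vsub x y) = norm (vsub y x).
Proof. rewrite <- vopp_sub, norm_opp. reflexivity. Qed.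

Lemma Cauchy_Schwarz_re x y : Rabs (re (inner x y)) <= norm x * norm y.
Proof.
  pose proof (norm_ge0 x). pose proof (norm_ge0 y).
  apply Rsqr_incr_0_var; [|nra]. rewrite <- Rsqr_abs. unfold Rsqr.
  replace (norm x * norm y * (norm x * norm y)) with ((norm x * norm x) * (norm y * norm y))
    by ring.
  rewrite !norm_sq. apply re_inner_sq_le.
Qed.

Lemma Cauchy_Schwarz_im x y : Rabs (im (inner x y)) <= norm x * norm y.
Proof.
  replace (im (inner x y)) with (re (inner x (vscal (Cimag 1) y)))
    by (rewrite inner_scalr; simpl; ring).
  replace (norm y) with (norm (vscal (Cimag 1) y)) by (rewrite norm_Cimag, Rabs_R1; ring).
  apply Cauchy_Schwarz_re.
Qed.

Lemma norm_add x y : norm (vadd x y) <= norm x + norm y.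
Proof.
  pose proof (norm_ge0 x). pose proof (norm_ge0 y).
  apply Rsqr_incr_0_var; [|lra]. unfold Rsqr.
  rewrite norm_sq, nsq_add, <- (norm_sq x), <- (norm_sq y).
  pose proof (Cauchy_Schwarz_re x y). pose proof (Rle_abs (re (inner x y))). nra.
Qed.

Lemma norm_triangle x y z : norm (vsub x z) <= norm (vsub x y) + norm (vsub y z).
Proof. rewrite (vsub_chain x y z). apply norm_add. Qed.

Lemma norm_le_sub x y : norm x <= norm y + norm (vsub x y).
Proof. pose proof (norm_triangle x y vzero). rewrite !vsub_0r in H. lra. Qed.

End InnerProduct.

Lemma Rabs_lt_all_eq0 (r : R) : (forall eps, eps > 0 -> Rabs r < eps) -> r = 0.
Proof.
  intro H. destruct (Req_dec r 0) as [|Hr]; auto.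
  specialize (H (Rabs r / 2)). pose proof (Rabs_pos_lt r Hr). lra.
Qed.

Lemma inv_INR_S_lt (d : R) : d > 0 -> exists N, forall n, (N <= n)%nat -> / (INR n + 1) < d.
Proof.
  intro Hd. destruct (archimed_cor1 d Hd) as [N [HN HN0]]. exists N. intros n Hn.
  apply le_INR in Hn. apply lt_INR in HN0. simpl in HN0.
  assert (/ (INR n + 1) < / INR N) by (apply Rinv_0_lt_contravar; lra). lra.
Qed.

Lemma inv_INR_S_le_1 (n : nat) : / (INR n + 1) <= 1.
Proof. pose proof (pos_INR n). rewrite <- Rinv_1. apply Rinv_le_contravar; lra. Qed.

Lemma strict_mono_ge (phi : nat -> nat) :
  (forall n, (phi n < phi (S n))%nat) -> forall n, (n <= phi n)%nat.
Proof. intros H n. induction n; [lia|]. specialize (H n). lia. Qed.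

Definition cauchy {X : HilbertSpace} (u : nat -> X) : Prop :=
  forall eps, eps > 0 -> exists N, forall m n, (N <= m)%nat -> (N <= n)%nat ->
     norm (vsub (u m) (u n)) < eps.

Section Convergence.
Context {X : HilbertSpace}.
Implicit Types (u v : nat -> X) (x y z w l m : X).

Lemma cauchy_converges u : cauchy u -> exists l, converges_to u l.
Proof. exact (complete X u). Qed.

Lemma converges_cauchy u l : converges_to u l -> cauchy u.
Proof.
  intros Hl eps Heps. destruct (Hl (eps / 2) ltac:(lra)) as [N HN]. exists N.
  intros m n Hm Hn. pose proof (norm_triangle (u m) l (u n)).
  specialize (HN m Hm) as H1. specialize (HN n Hn) as H2. rewrite (norm_sub_sym l) in H. lra.
Qed.

Lemma converges_unique u l m : converges_to u l -> converges_to u m -> l = m.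
Proof.
  intros Hl Hm. apply vsub_eq0, norm_eq0, Rabs_lt_all_eq0. intros eps Heps.
  destruct (Hl (eps / 2) ltac:(lra)) as [N1 H1]. destruct (Hm (eps / 2) ltac:(lra)) as [N2 H2].
  specialize (H1 (max N1 N2) ltac:(lia)). specialize (H2 (max N1 N2) ltac:(lia)).
  rewrite Rabs_pos_eq by apply norm_ge0.
  pose proof (norm_triangle l (u (max N1 N2)) m). rewrite (norm_sub_sym l (u _)) in H. lra.
Qed.

Lemma converges_const l : converges_to (fun _ => l) l.
Proof. intros eps Heps. exists O. intros. rewrite vsub_self, norm_0. lra. Qed.

Lemma converges_add u v l m : converges_to u l -> converges_to v m ->
  converges_to (fun n => vadd (u n) (v n)) (vadd l m).
Proof.
  intros Hl Hm eps Heps.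
  destruct (Hl (eps / 2) ltac:(lra)) as [N1 H1]. destruct (Hm (eps / 2) ltac:(lra)) as [N2 H2].
  exists (max N1 N2). intros n Hn. rewrite vadd_sub4.
  specialize (H1 n ltac:(lia)). specialize (H2 n ltac:(lia)).
  pose proof (norm_add (vsub (u n) l) (vsub (v n) m)). lra.
Qed.

Lemma converges_scal u l (a : Cx) : converges_to u l ->
  converges_to (fun n => vscal a (u n)) (vscal a l).
Proof.
  intros Hl eps Heps. set (K := sqrt (re a * re a + im a * im a)).
  assert (HK : 0 <= K) by apply sqrt_pos.
  destruct (Hl (eps / (K + 1)) ltac:(apply Rdiv_lt_0_compat; lra)) as [N H1].
  exists N. intros n Hn. rewrite <- vscal_sub, norm_scal. fold K.
  specialize (H1 n Hn).
  assert (K * norm (vsub (u n) l) <= K * (eps / (K + 1))) by (apply Rmult_le_compat_l; lra).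
  assert (K * (eps / (K + 1)) < eps).
  { apply (Rmult_lt_reg_r (K + 1)); [lra|]. field_simplify; [|lra]. nra. }
  lra.
Qed.

Lemma converges_sub u v l m : converges_to u l -> converges_to v m ->
  converges_to (fun n => vsub (u n) (v n)) (vsub l m).
Proof.
  intros Hl Hm eps Heps.
  destruct (converges_add _ _ _ _ Hl (converges_scal _ _ (Creal (-1)) Hm) eps Heps) as [N HN].
  exists N. intros n Hn. specialize (HN n Hn). rewrite !vscal_m1 in HN. exact HN.
Qed.

Lemma converges_norm_ge u l (c : R) : converges_to u l -> (forall n, c <= norm (u n)) ->
  c <= norm l.
Proof.
  intros Hl Hc. apply Rnot_lt_le. intro Hlt.
  destruct (Hl (c - norm l) ltac:(lra)) as [N HN].
  pose proof (HN N (le_n N)). pose proof (norm_le_sub (u N) l). specialize (Hc N). lra.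
Qed.

Lemma converges_zero_of_norm_le u : (forall n, norm (u n) <= / (INR n + 1)) ->
  converges_to u vzero.
Proof.
  intros Hu eps Heps. destruct (inv_INR_S_lt eps Heps) as [N HN]. exists N. intros n Hn.
  rewrite vsub_0r. specialize (Hu n). specialize (HN n Hn). lra.
Qed.

Lemma inner_lim u v l m z w : converges_to u l -> converges_to v m ->
  (forall n, inner (u n) z = inner (v n) w) -> inner l z = inner m w.
Proof.
  intros Hl Hm Heq.
  assert (Hgen : forall f : Cx -> R,
     (forall x y, Rabs (f (inner x y)) <= norm x * norm y) ->
     (forall p q, f (Cadd p (Copp q)) = f p - f q) ->
     f (inner l z) = f (inner m w)).
  { intros f Hf Hlin. apply Rminus_diag_uniq, Rabs_lt_all_eq0. intros eps Heps.
    set (K := norm z + norm w + 1).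
    assert (HK : 0 < K) by (unfold K; pose proof (norm_ge0 z); pose proof (norm_ge0 w); lra).
    destruct (Hl (eps / K) ltac:(apply Rdiv_lt_0_compat; lra)) as [N1 H1].
    destruct (Hm (eps / K) ltac:(apply Rdiv_lt_0_compat; lra)) as [N2 H2].
    set (n := max N1 N2). specialize (H1 n ltac:(lia)). specialize (H2 n ltac:(lia)).
    assert (E1 : f (inner (vsub l (u n)) z) = f (inner l z) - f (inner (v n) w)).
    { rewrite inner_subl, Hlin, Heq. reflexivity. }
    assert (E2 : f (inner (vsub m (v n)) w) = f (inner m w) - f (inner (v n) w)).
    { rewrite inner_subl, Hlin. reflexivity. }
    pose proof (Hf (vsub l (u n)) z) as B1. pose proof (Hf (vsub m (v n)) w) as B2.
    rewrite norm_sub_sym in B1, B2.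
    pose proof (norm_ge0 z). pose proof (norm_ge0 w).
    assert (norm (vsub (u n) l) * norm z <= eps / K * norm z) by (apply Rmult_le_compat_r; lra).
    assert (norm (vsub (v n) m) * norm w <= eps / K * norm w) by (apply Rmult_le_compat_r; lra).
    assert (eps / K * norm z + eps / K * norm w < eps).
    { apply (Rmult_lt_reg_r K); [lra|]. field_simplify; [|lra]. unfold K. nra. }
    replace (f (inner l z) - f (inner m w)) with
      (f (inner (vsub l (u n)) z) - f (inner (vsub m (v n)) w)) by lra.
    pose proof (Rabs_triang (f (inner (vsub l (u n)) z)) (- f (inner (vsub m (v n)) w))) as T.
    rewrite Rabs_Ropp in T. unfold Rminus. lra. }
  apply Cx_ext.
  - apply (Hgen re); [apply Cauchy_Schwarz_re | intros; simpl; ring].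
  - apply (Hgen im); [apply Cauchy_Schwarz_im | intros; simpl; ring].
Qed.

End Convergence.

Definition closed_subspace {X : HilbertSpace} (M : X -> Prop) : Prop :=
  M vzero /\ (forall a b, M a -> M b -> M (vadd a b)) /\ (forall c a, M a -> M (vscal c a)) /\
  (forall u l, (forall n, M (u n)) -> converges_to u l -> M l).

Lemma Rinf_nonneg_exists (E : R -> Prop) : (exists r, E r) -> (forall r, E r -> 0 <= r) ->
  exists d, 0 <= d /\ (forall r, E r -> d <= r) /\
    (forall eps, eps > 0 -> exists r, E r /\ r < d + eps).
Proof.
  intros [r0 Hr0] Hpos.
  destruct (completeness (fun r => E (- r))) as [s [Hub Hlub]].
  - exists 0. intros r Hr. specialize (Hpos _ Hr). lra.
  - exists (- r0). rewrite Ropp_involutive. exact Hr0.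
  - exists (- s). split; [|split].
    + apply Ropp_0_ge_le_contravar, Rle_ge, Hlub. intros r Hr. specialize (Hpos _ Hr). lra.
    + intros r Hr. assert (Hr' : E (- - r)) by (rewrite Ropp_involutive; exact Hr).
      specialize (Hub _ Hr'). lra.
    + intros eps Heps. apply NNPP. intro Hnone. apply (Rlt_irrefl s).
      apply (Rle_lt_trans _ (s - eps)); [|lra]. apply Hlub. intros r Hr.
      apply Rnot_lt_le. intro Hlt. apply Hnone. exists (- r). split; [exact Hr | lra].
Qed.

Lemma sqrt_add_le (a b : R) : 0 <= a -> 0 <= b -> sqrt (a + b) <= sqrt a + sqrt b.
Proof.
  intros Ha Hb. pose proof (sqrt_pos a). pose proof (sqrt_pos b).
  apply Rsqr_incr_0_var; [|lra]. unfold Rsqr.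
  rewrite sqrt_sqrt by lra.
  replace ((sqrt a + sqrt b) * (sqrt a + sqrt b))
    with (sqrt a * sqrt a + sqrt b * sqrt b + 2 * (sqrt a * sqrt b)) by ring.
  rewrite !sqrt_sqrt by lra. nra.
Qed.

Lemma re_inner_eq0_of_min {X : HilbertSpace} (w z : X) :
  (forall t, nsq w <= nsq (vsub w (vscal (Creal t) z))) -> re (inner w z) = 0.
Proof.
  intro H. set (a := nsq z). set (b := re (inner w z)).
  assert (Ht : forall t, 0 <= t * t * a - 2 * t * b).
  { intro t. specialize (H t). rewrite nsq_sub, nsq_scal, inner_scalr in H. simpl in H.
    unfold a, b. lra. }
  destruct (Req_dec a 0) as [Ha|Ha].
  - apply Req_le, nsq_eq0 in Ha. unfold b. rewrite Ha, inner_0r. reflexivity.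
  - assert (0 < a) by (pose proof (nsq_ge0 z); unfold a in *; lra).
    specialize (Ht (b / a)).
    assert (a * (b / a * (b / a) * a - 2 * (b / a) * b) = - (b * b)) by (field; exact Ha).
    assert (0 <= a * (b / a * (b / a) * a - 2 * (b / a) * b)) by (apply Rmult_le_pos; lra).
    nra.
Qed.

Section Projection.
Context {X : HilbertSpace} (M : X -> Prop).
Hypothesis HM : closed_subspace M.

Lemma closed_subspace_sub a b : M a -> M b -> M (vsub a b).
Proof.
  destruct HM as [_ [Hadd [Hscal _]]]. intros Ha Hb. unfold vsub. rewrite <- vscal_m1. auto.
Qed.

Lemma minimizing_sequence_cauchy (x : X) (d : R) (m : nat -> X) :
  (forall n, M (m n)) -> (forall y, M y -> d <= nsq (vsub x y)) ->
  (forall n, nsq (vsub x (m n)) < d + / (INR n + 1)) -> cauchy m.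
Proof.
  destruct HM as [_ [Hadd [Hscal _]]]. intros Hm Hd Hmin.
  assert (Hpar : forall p q, nsq (vsub (m q) (m p)) < 2 * / (INR p + 1) + 2 * / (INR q + 1)).
  { intros p q. set (a := vsub x (m p)). set (b := vsub x (m q)).
    (* the midpoint of [m p] and [m q] lies in [M] *)
    set (c := vscal (Creal (/2)) (vadd (m p) (m q))).
    assert (Eab : vadd a b = vscal (Creal 2) (vsub x c)).
    { unfold a, b, c. rewrite vscal_sub, vscal_mul.
      replace (Cmul (Creal 2) (Creal (/2))) with Defs.C1 by (apply Cx_ext; simpl; field).
      replace (Creal 2) with (Cadd Defs.C1 Defs.C1) by (apply Cx_ext; simpl; ring).
      rewrite vscal_adds, !vscal_one, vadd_sub4. reflexivity. }
    assert (Eba : vsub a b = vsub (m q) (m p)).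
    { unfold a, b. rewrite vsub_sub4, vsub_self, vsub_0l, vopp_sub. reflexivity. }
    pose proof (parallelogram a b) as HP. rewrite Eab, Eba, nsq_scal in HP. simpl in HP.
    pose proof (Hd c ltac:(unfold c; auto)). pose proof (Hmin p). pose proof (Hmin q).
    unfold a, b in HP. lra. }
  intros eps Heps. destruct (inv_INR_S_lt (eps * eps / 4)) as [N HN]; [nra|].
  exists N. intros p q Hp Hq. apply norm_lt_nsq; [lra|].
  specialize (Hpar q p). specialize (HN p Hp) as H1. specialize (HN q Hq) as H2. lra.
Qed.

Lemma minimizing_sequence_limit (x y : X) (d : R) (m : nat -> X) : 0 <= d ->
  (forall n, nsq (vsub x (m n)) < d + / (INR n + 1)) -> converges_to m y ->
  nsq (vsub x y) <= d.
Proof.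
  intros Hd Hmin Hy.
  assert (Hnorm : norm (vsub x y) <= sqrt d).
  { apply Rle_plus_epsilon. intros eta Heta.
    destruct (inv_INR_S_lt ((eta / 2) * (eta / 2))) as [N1 H1]; [nra|].
    destruct (Hy (eta / 2) ltac:(lra)) as [N2 H2].
    set (n := max N1 N2). specialize (H1 n ltac:(lia)). specialize (H2 n ltac:(lia)).
    pose proof (pos_INR n). assert (Hinv : 0 < / (INR n + 1)) by (apply Rinv_0_lt_compat; lra).
    assert (Hs : sqrt (/ (INR n + 1)) < eta / 2).
    { rewrite <- (sqrt_square (eta / 2)) by lra. apply sqrt_lt_1; nra. }
    assert (Hxm : norm (vsub x (m n)) <= sqrt d + sqrt (/ (INR n + 1))).
    { eapply Rle_trans; [apply sqrt_le_1_alt, Rlt_le, Hmin | apply sqrt_add_le; lra]. }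
    pose proof (norm_triangle x (m n) y). lra. }
  rewrite <- norm_sq, <- (sqrt_sqrt d Hd). pose proof (norm_ge0 (vsub x y)).
  apply Rmult_le_compat; lra.
Qed.

Lemma minimizer_perp (x y : X) : M y ->
  (forall z, M z -> nsq (vsub x y) <= nsq (vsub x z)) -> perp M (vsub x y).
Proof.
  destruct HM as [_ [Hadd [Hscal _]]]. intros My Hmin z Mz.
  assert (Hdir : forall z', M z' -> forall t,
             nsq (vsub x y) <= nsq (vsub (vsub x y) (vscal (Creal t) z'))).
  { intros z' Mz' t. replace (vsub (vsub x y) (vscal (Creal t) z'))
      with (vsub x (vadd y (vscal (Creal t) z'))) by (unfold vsub; rewrite vopp_add, vadd_assoc; reflexivity).
    apply Hmin. auto. }
  pose proof (re_inner_eq0_of_min _ _ (Hdir z Mz)) as Hre.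
  pose proof (re_inner_eq0_of_min _ _ (Hdir _ (Hscal (Cimag 1) z Mz))) as Him.
  rewrite inner_scalr in Him. simpl in Him.
  apply Cx_ext; simpl; lra.
Qed.

Lemma orth_proj_exists (x : X) : exists y, orth_proj M x y.
Proof.
  pose proof HM as [H0 [_ [_ Hclosed]]].
  destruct (Rinf_nonneg_exists (fun r => exists y, M y /\ r = nsq (vsub x y)))
    as [d [Hd [Hlow Happrox]]].
  - exists (nsq (vsub x vzero)), vzero. auto.
  - intros r [y [_ ->]]. apply nsq_ge0.
  - destruct (choice (fun n y => M y /\ nsq (vsub x y) < d + / (INR n + 1))) as [m Hm].
    { intro n. pose proof (pos_INR n).
      destruct (Happrox (/ (INR n + 1))) as [r [[y [My ->]] Hr]];
        [apply Rlt_gt, Rinv_0_lt_compat; lra | eauto]. }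
    assert (Hlow' : forall y, M y -> d <= nsq (vsub x y)) by (intros y My; apply Hlow; eauto).
    destruct (cauchy_converges m) as [y Hy].
    { apply (minimizing_sequence_cauchy x d); [intro n; apply Hm | exact Hlow' | intro n; apply Hm]. }
    assert (My : M y) by (apply (Hclosed m y); [intro n; apply Hm | exact Hy]).
    exists y. split; [exact My|]. apply minimizer_perp; [exact My|].
    intros z Mz. pose proof (Hlow' z Mz).
    pose proof (minimizing_sequence_limit x y d m Hd (fun n => proj2 (Hm n)) Hy). lra.
Qed.

End Projection.

Section Relations.
Context {X : HilbertSpace}.
Implicit Types (T : X -> X -> Prop) (M : X -> Prop).

Lemma perp_closed_subspace M : closed_subspace (perp M).
Proof.
  split; [|split; [|split]].
  - intros z _. apply inner_0l.
  - intros a b Ha Hb z Hz. rewrite inner_addl, Ha, Hb by auto. apply Cx_ext; simpl; lra.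
  - intros c a Ha z Hz. rewrite inner_scall, Ha by auto. apply Cx_ext; simpl; lra.
  - intros u l Hu Hl z Hz. rewrite <- (inner_0l z).
    apply (inner_lim u (fun _ => vzero) l vzero z z Hl (converges_const _)).
    intro n. rewrite Hu, inner_0l; auto.
Qed.

Lemma closed_subspace_full M : closed_subspace M ->
  (forall w, perp M w -> w = vzero) -> forall u, M u.
Proof.
  intros HM Htriv u. destruct (orth_proj_exists M HM u) as [y [My Hperp]].
  rewrite <- (vadd_sub_cancel u y), (Htriv _ Hperp), vadd_zero. exact My.
Qed.

Lemma orth_proj_sub M a b qa qb : closed_subspace M ->
  orth_proj M a qa -> orth_proj M b qb -> orth_proj M (vsub a b) (vsub qa qb).
Proof.
  intros HM [Ha Pa] [Hb Pb]. split.
  - apply closed_subspace_sub; auto.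
  - rewrite vsub_sub4. apply closed_subspace_sub; auto. apply perp_closed_subspace.
Qed.

Lemma orth_proj_scal M v q c : closed_subspace M ->
  orth_proj M v q -> orth_proj M (vscal c v) (vscal c q).
Proof.
  intros [_ [_ [Hs _]]] [Hq Pq]. split; auto.
  rewrite <- vscal_sub. pose proof (perp_closed_subspace M) as [_ [_ [Hs' _]]]. auto.
Qed.

Lemma orth_proj_unique M v q1 q2 : closed_subspace M ->
  orth_proj M v q1 -> orth_proj M v q2 -> q1 = q2.
Proof.
  intros HM H1 H2. destruct (orth_proj_sub M v v q1 q2 HM H1 H2) as [Hd Pd].
  rewrite vsub_self in Pd. apply vsub_eq0, nsq_eq0.
  pose proof (Pd _ Hd) as E. rewrite vsub_0l, inner_oppl in E.
  apply (f_equal re) in E. simpl in E. unfold nsq. lra.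
Qed.

Lemma orth_proj_inner M v q z : orth_proj M v q -> M z -> inner q z = inner v z.
Proof.
  intros [_ Hq] Hz. pose proof (Hq z Hz) as E. rewrite inner_subl in E.
  apply Cx_ext; [apply (f_equal re) in E | apply (f_equal im) in E]; simpl in E; lra.
Qed.

Lemma adjoint_closed T : is_closed (adjoint T).
Proof.
  intros xs fs y g Hn Hx Hf z h Hzh.
  apply (inner_lim fs xs g y z h Hf Hx). intro n. apply Hn, Hzh.
Qed.

Lemma self_adjoint_closed T : self_adjoint T -> is_closed T.
Proof.
  intros HT xs fs y g Hn Hx Hf. apply HT.
  apply (adjoint_closed T xs fs); auto. intro n. apply HT, Hn.
Qed.

Lemma subspace_sub T x f y g : is_subspace T -> T x f -> T y g -> T (vsub x y) (vsub f g).
Proof. intros [_ [Ha Hs]] H1 H2. unfold vsub. rewrite <- !vscal_m1. auto. Qed.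

Lemma multivalued_part_closed T : is_subspace T -> is_closed T ->
  closed_subspace (img_at T vzero).
Proof.
  intros HT Hc. pose proof HT as [H0 [Ha Hs]]. unfold img_at. split; [|split; [|split]].
  - exact H0.
  - intros a b H1 H2. rewrite <- (vadd_zero _ vzero). auto.
  - intros c a H1. rewrite <- (vscal_v0 c). auto.
  - intros u l Hu Hl. apply (Hc (fun _ => vzero) u vzero l Hu (converges_const _) Hl).
Qed.

Lemma op_part_exists T x f : is_subspace T -> closed_subspace (img_at T vzero) ->
  T x f -> exists v, op_part T x v /\ norm v <= norm f.
Proof.
  intros HT H0 Hxf. destruct (orth_proj_exists _ H0 f) as [m [Hm Hperp]].
  exists (vsub f m). split; [split|].
  - pose proof (subspace_sub T _ _ _ _ HT Hxf Hm) as E. rewrite vsub_0r in E. exact E.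
  - intros y g [-> Hg]. rewrite inner_0r, (Hperp g Hg). apply Cx_ext; simpl; lra.
  - apply norm_le_nsq. rewrite <- (vadd_sub_cancel f m) at 2.
    rewrite nsq_add, re_inner_sym, (Hperp m Hm). simpl. pose proof (nsq_ge0 m). lra.
Qed.

Lemma op_part_sub T x f y g : is_subspace T ->
  op_part T x f -> op_part T y g -> op_part T (vsub x y) (vsub f g).
Proof.
  intros HT [H1 O1] [H2 O2]. split; [apply subspace_sub; auto|].
  intros y' g' Ti. specialize (O1 _ _ Ti). specialize (O2 _ _ Ti).
  rewrite !inner_subl.
  apply Cx_ext; [apply (f_equal re) in O1, O2 | apply (f_equal im) in O1, O2];
    simpl in *; lra.
Qed.

Lemma op_part_scal T x f c : is_subspace T ->
  op_part T x f -> op_part T (vscal c x) (vscal c f).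
Proof.
  intros [_ [_ Hs]] [H1 O1]. split; [auto|].
  intros y' g' Ti. specialize (O1 _ _ Ti). rewrite !inner_scall.
  apply (f_equal re) in O1 as Hre. apply (f_equal im) in O1 as Him. simpl in Hre, Him.
  apply Cx_ext; simpl; nra.
Qed.

Lemma op_part_functional T x f1 f2 : is_subspace T ->
  op_part T x f1 -> op_part T x f2 -> f1 = f2.
Proof.
  intros HT H1 H2. destruct (op_part_sub T _ _ _ _ HT H1 H2) as [Hd O].
  rewrite vsub_self in Hd. specialize (O _ _ (conj eq_refl Hd)).
  rewrite vsub_self, inner_0l in O. apply (f_equal re) in O. simpl in O.
  apply vsub_eq0, nsq_eq0. unfold nsq. lra.
Qed.

End Relations.

Lemma pow_half_le_inv_INR_S (n : nat) : (/2) ^ n <= / (INR n + 1).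
Proof.
  assert (H : INR n + 1 <= 2 ^ n).
  { induction n; [simpl; lra|]. rewrite S_INR. simpl. pose proof (pos_INR n). lra. }
  rewrite pow_inv. apply Rinv_le_contravar; [pose proof (pos_INR n); lra | exact H].
Qed.

Lemma contraction_fixpoint {X : HilbertSpace} (F : X -> X) :
  (forall a b, norm (vsub (F a) (F b)) <= /2 * norm (vsub a b)) -> exists u, F u = u.
Proof.
  intro HF. set (u := fun n => Nat.iter n F vzero).
  set (d0 := norm (vsub (u 1%nat) (u 0%nat))).
  assert (Hd0 : 0 <= d0) by apply norm_ge0.
  assert (Step : forall n, norm (vsub (u (S n)) (u n)) <= (/2) ^ n * d0).
  { induction n; [rewrite pow_O, Rmult_1_l; apply Rle_refl|].
    eapply Rle_trans; [apply (HF (u (S n)) (u n))|]. rewrite <- tech_pow_Rmult. lra. }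
  assert (Tail : forall k n, norm (vsub (u (n + k)%nat) (u n)) <= 2 * d0 * ((/2) ^ n - (/2) ^ (n + k))).
  { induction k; intro n.
    - rewrite Nat.add_0_r, vsub_self, norm_0. lra.
    - pose proof (norm_triangle (u (n + S k)%nat) (u (n + k)%nat) (u n)).
      replace (n + S k)%nat with (S (n + k)) in * by lia.
      specialize (Step (n + k)%nat). specialize (IHk n).
      simpl ((/2) ^ S (n + k)). lra. }
  assert (Bnd : forall m n, (n <= m)%nat -> norm (vsub (u m) (u n)) <= 2 * d0 * / (INR n + 1)).
  { intros m n Hnm. replace m with (n + (m - n))%nat by lia.
    pose proof (Tail (m - n)%nat n). pose proof (pow_le (/2) (n + (m - n))%nat ltac:(lra)).
    pose proof (pow_half_le_inv_INR_S n). nra. }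
  assert (Hc : cauchy u).
  { intros eps Heps. destruct (inv_INR_S_lt (eps / (2 * d0 + 1))) as [N HN].
    { apply Rlt_gt, Rdiv_lt_0_compat; lra. }
    assert (Hord : forall p q, (N <= q)%nat -> (q <= p)%nat -> norm (vsub (u p) (u q)) < eps).
    { intros p q Hq Hqp. specialize (Bnd p q Hqp). specialize (HN q Hq).
      pose proof (Rinv_0_lt_compat (INR q + 1) ltac:(pose proof (pos_INR q); lra)).
      apply (Rmult_lt_compat_l (2 * d0 + 1)) in HN; [|lra].
      replace ((2 * d0 + 1) * (eps / (2 * d0 + 1))) with eps in HN by (field; lra). nra. }
    exists N. intros m n Hm Hn. destruct (Nat.le_ge_cases n m).
    - apply Hord; auto.
    - rewrite norm_sub_sym. apply Hord; auto. }
  destruct (cauchy_converges u Hc) as [l Hl]. exists l.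
  assert (HFl : converges_to (fun n => u (S n)) (F l)).
  { intros eps Heps. destruct (Hl (2 * eps) ltac:(lra)) as [N HN]. exists N. intros n Hn.
    rewrite norm_sub_sym. eapply Rle_lt_trans; [apply (HF l (u n))|].
    rewrite norm_sub_sym. specialize (HN n Hn). lra. }
  apply (converges_unique (fun n => u (S n))); [exact HFl|].
  intros eps Heps. destruct (Hl eps Heps) as [N HN]. exists N. intros n Hn. apply HN. lia.
Qed.

Definition shift_onto {X : HilbertSpace} (T : X -> X -> Prop) (s : R) : Prop :=
  forall y, exists x h, T x h /\ y = vsub h (vscal (Cimag s) x).

Lemma hermitian_shift_onto_self_adjoint {X : HilbertSpace} (T : X -> X -> Prop) (N : R) :
  hermitian T -> shift_onto T N -> shift_onto T (- N) -> self_adjoint T.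
Proof.
  intros HT Hplus Hminus y g. split; [apply HT|]. intro Hadj.
  destruct (Hplus (vsub g (vscal (Cimag N) y))) as [x [h [Txh E1]]].
  set (w := vsub y x).
  assert (Egh : vsub g h = vscal (Cimag N) w).
  { unfold w. rewrite vscal_sub. apply vsub_eq0. rewrite vsub_sub4, E1. apply vsub_self. }
  destruct (Hminus w) as [z [k [Tzk E2]]].
  assert (Hzk : inner (vsub g h) z = inner w k).
  { pose proof (Hadj z k Tzk) as H1. pose proof (HT x h Txh z k Tzk) as H2.
    unfold w. rewrite !inner_subl.
    apply Cx_ext; [apply (f_equal re) in H1, H2 | apply (f_equal im) in H1, H2]; simpl; lra. }
  rewrite Egh, inner_scall in Hzk.
  assert (Hw : w = vzero).
  { apply nsq_eq0. unfold nsq. rewrite E2 at 2. rewrite inner_subr, inner_scalr.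
    apply (f_equal re) in Hzk. simpl in *. lra. }
  assert (y = x) by (apply vsub_eq0; exact Hw). subst x.
  rewrite Hw, vscal_v0 in Egh. apply vsub_eq0 in Egh. subst. exact Txh.
Qed.

Section Perturbation.
Context {X : HilbertSpace} (S A : X -> X -> Prop).
Hypothesis HSs : is_subspace S.
Hypothesis HSsa : self_adjoint S.
Hypothesis HAs : is_subspace A.
Hypothesis HAc : is_closed A.
Hypothesis HAh : hermitian A.
Hypothesis HDom : forall x, dom S x -> dom A x.

Local Notation P := (perp (img_at S vzero)).

Lemma S_shift_nsq (s : R) x f :
  S x f -> nsq (vsub f (vscal (Cimag s) x)) = nsq f + s * s * nsq x.
Proof.
  intro H. rewrite nsq_sub, nsq_scal, inner_scalr. simpl.
  pose proof (f_equal im (proj1 (HSsa x f) H x f H)) as Ei.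
  rewrite (im_inner_sym f x) in Ei. replace (im (inner f x)) with 0 by lra. ring.
Qed.

Lemma S_shift_bound (s : R) x f : S x f ->
  norm f <= norm (vsub f (vscal (Cimag s) x)) /\
  Rabs s * norm x <= norm (vsub f (vscal (Cimag s) x)).
Proof.
  intro H. pose proof (S_shift_nsq s x f H) as E. pose proof (nsq_ge0 f) as Hf.
  pose proof (nsq_ge0 x). assert (0 <= s * s * nsq x) by (apply Rmult_le_pos; nra).
  split.
  - apply norm_le_nsq. lra.
  - rewrite <- norm_Cimag. apply norm_le_nsq. rewrite nsq_scal. simpl. lra.
Qed.

Lemma S_shift_injective (s : R) x1 f1 x2 f2 : s <> 0 -> S x1 f1 -> S x2 f2 ->
  vsub f1 (vscal (Cimag s) x1) = vsub f2 (vscal (Cimag s) x2) -> x1 = x2.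
Proof.
  intros Hs H1 H2 E. pose proof (S_shift_nsq s _ _ (subspace_sub S _ _ _ _ HSs H1 H2)) as N.
  rewrite vscal_sub, vsub_sub4, E, vsub_self, nsq_0 in N.
  apply vsub_eq0, nsq_eq0. pose proof (nsq_ge0 (vsub f1 f2)).
  pose proof (nsq_ge0 (vsub x1 x2)). assert (0 < s * s) by nra. nra.
Qed.

Lemma S_shift_limit (s : R) (xs fs : nat -> X) (l : X) : s <> 0 ->
  (forall n, S (xs n) (fs n)) -> converges_to (fun n => vsub (fs n) (vscal (Cimag s) (xs n))) l ->
  exists x f, S x f /\ l = vsub f (vscal (Cimag s) x).
Proof.
  intros Hs HS Hl.
  (* by [S_shift_nsq], the shifted sequence controls both components of the graph sequence *)
  assert (Hcauchy : forall eps, eps > 0 -> exists N, forall m n, (N <= m)%nat -> (N <= n)%nat ->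
            nsq (vsub (fs m) (fs n)) + s * s * nsq (vsub (xs m) (xs n)) < eps * eps).
  { intros eps Heps. destruct (converges_cauchy _ l Hl eps Heps) as [N HN]. exists N.
    intros m n Hm Hn. specialize (HN m n Hm Hn). rewrite vsub_sub4, <- vscal_sub in HN.
    rewrite <- S_shift_nsq by (apply subspace_sub; auto). apply nsq_lt_norm, HN. }
  assert (Hs2 : 0 < s * s) by nra.
  destruct (cauchy_converges xs) as [x Hx].
  { intros eps Heps. destruct (Hcauchy (Rabs s * eps)) as [N HN].
    { apply Rlt_gt, Rmult_lt_0_compat; [apply Rabs_pos_lt|]; lra. }
    exists N. intros m n Hm Hn. specialize (HN m n Hm Hn). apply norm_lt_nsq; [lra|].
    assert (Rabs s * Rabs s = s * s) by (rewrite <- Rabs_mult; apply Rabs_pos_eq; nra).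
    pose proof (nsq_ge0 (vsub (fs m) (fs n))). pose proof (nsq_ge0 (vsub (xs m) (xs n))). nra. }
  destruct (cauchy_converges fs) as [f Hf].
  { intros eps Heps. destruct (Hcauchy eps Heps) as [N HN].
    exists N. intros m n Hm Hn. specialize (HN m n Hm Hn). apply norm_lt_nsq; [lra|].
    pose proof (nsq_ge0 (vsub (xs m) (xs n))). nra. }
  exists x, f. split.
  - exact (self_adjoint_closed S HSsa xs fs x f HS Hx Hf).
  - exact (converges_unique _ _ _ Hl (converges_sub _ _ _ _ Hf (converges_scal _ _ (Cimag s) Hx))).
Qed.

Lemma S_shift_range_closed (s : R) : s <> 0 ->
  closed_subspace (fun u => exists x f, S x f /\ u = vsub f (vscal (Cimag s) x)).
Proof.
  intro Hs. pose proof HSs as [HS0 [HSadd HSscal]]. split; [|split; [|split]].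
  - exists vzero, vzero. rewrite vscal_v0, vsub_self. auto.
  - intros a b [x1 [f1 [H1 ->]]] [x2 [f2 [H2 ->]]]. exists (vadd x1 x2), (vadd f1 f2).
    rewrite vscal_addv, vadd_sub4. auto.
  - intros c a [x [f [H ->]]]. exists (vscal c x), (vscal c f).
    rewrite vscal_sub, vscal_mulC. auto.
  - intros us l Hu Hl.
    destruct (choice (fun n (p : X * X) => S (fst p) (snd p) /\
                us n = vsub (snd p) (vscal (Cimag s) (fst p)))) as [F HF].
    { intro n. destruct (Hu n) as [x [f H]]. exists (x, f). exact H. }
    apply (S_shift_limit s (fun n => fst (F n)) (fun n => snd (F n)) l Hs); [apply HF|].
    intros eps Heps. destruct (Hl eps Heps) as [N HN]. exists N. intros n Hn.
    rewrite <- (proj2 (HF n)). apply HN, Hn.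
Qed.

Lemma S_shift_onto (s : R) : s <> 0 -> shift_onto S s.
Proof.
  intros Hs u. apply (closed_subspace_full _ (S_shift_range_closed s Hs)). clear u.
  intros w Hw.
  (* [w] orthogonal to the range of [S - i s] is an eigenvector of [S] for [- i s] *)
  assert (Sw : S w (vscal (Cimag (- s)) w)).
  { apply HSsa. intros z h Hzh. specialize (Hw _ (ex_intro _ z (ex_intro _ h (conj Hzh eq_refl)))).
    rewrite inner_subr, inner_scalr in Hw. rewrite inner_scall.
    apply Cx_ext; [apply (f_equal re) in Hw | apply (f_equal im) in Hw]; simpl in *; lra. }
  pose proof (S_shift_nsq (- s) _ _ Sw) as E. rewrite vsub_self, nsq_0, nsq_scal in E.
  unfold Cimag in E. simpl in E. apply nsq_eq0. pose proof (nsq_ge0 w).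
  assert (0 < s * s) by nra. nra.
Qed.

Lemma dom_S_perp x f : S x f -> P x.
Proof.
  intros H g Hg. rewrite <- (inner_0r f), <- (proj1 (HSsa x f) H vzero g Hg).
  reflexivity.
Qed.

Lemma perp_dom_S_multivalued w : (forall x f, S x f -> inner w x = C0) -> S vzero w.
Proof. intro H. apply HSsa. intros x f Hxf. rewrite (H x f Hxf), inner_0l. reflexivity. Qed.

Lemma orth_proj_P_multivalued v q : orth_proj P v q -> S vzero (vsub v q).
Proof.
  intros [_ Hq]. apply perp_dom_S_multivalued. intros x f Hxf. apply Hq.
  exact (dom_S_perp x f Hxf).
Qed.

(* The graph of Q A_s (S - i s)^{-1}. *)
Definition Kres (s : R) (u k : X) : Prop :=
  exists x f g, S x f /\ vsub f (vscal (Cimag s) x) = u /\ op_part A x g /\ orth_proj P g k.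

Lemma Kres_total (s : R) u : s <> 0 -> exists k, Kres s u k.
Proof.
  intro Hs. destruct (S_shift_onto s Hs u) as [x [f [Hxf Eu]]].
  destruct (HDom x (ex_intro _ f Hxf)) as [g0 Hg0].
  destruct (op_part_exists A x g0 HAs (multivalued_part_closed A HAs HAc) Hg0) as [g [Hg _]].
  destruct (orth_proj_exists P (perp_closed_subspace _) g) as [k Hk].
  exists k, x, f, g. auto.
Qed.

Lemma Kres_functional (s : R) u k1 k2 : s <> 0 -> Kres s u k1 -> Kres s u k2 -> k1 = k2.
Proof.
  intros Hs (x1 & f1 & g1 & H1 & E1 & G1 & K1) (x2 & f2 & g2 & H2 & E2 & G2 & K2).
  assert (x1 = x2) by (apply (S_shift_injective s x1 f1 x2 f2); congruence). subst x2.
  assert (g1 = g2) by (apply (op_part_functional A x1); auto). subst g2.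
  apply (orth_proj_unique P g1); auto. apply perp_closed_subspace.
Qed.

Lemma Kres_sub (s : R) a b ka kb : Kres s a ka -> Kres s b kb -> Kres s (vsub a b) (vsub ka kb).
Proof.
  intros (x1 & f1 & g1 & H1 & E1 & G1 & K1) (x2 & f2 & g2 & H2 & E2 & G2 & K2).
  exists (vsub x1 x2), (vsub f1 f2), (vsub g1 g2). split; [|split; [|split]].
  - apply subspace_sub; auto.
  - rewrite vscal_sub, vsub_sub4, E1, E2. reflexivity.
  - apply op_part_sub; auto.
  - apply orth_proj_sub; auto. apply perp_closed_subspace.
Qed.

Lemma Kres_scal (s : R) u k c : Kres s u k -> Kres s (vscal c u) (vscal c k).
Proof.
  intros (x & f & g & H & E & G & K). pose proof HSs as [_ [_ Hsc]].
  exists (vscal c x), (vscal c f), (vscal c g). split; [|split; [|split]].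
  - auto.
  - rewrite <- E, vscal_sub, vscal_mulC. reflexivity.
  - apply op_part_scal; auto.
  - apply orth_proj_scal; auto. apply perp_closed_subspace.
Qed.

Lemma Kres_0 (s : R) : s <> 0 -> Kres s vzero vzero.
Proof.
  intro Hs. destruct (Kres_total s vzero Hs) as [k Hk].
  pose proof (Kres_sub _ _ _ _ _ Hk Hk) as H. rewrite !vsub_self in H. exact H.
Qed.

(* For [z] in [D(S)]: [<l, z> = lim <g_n, z> = lim <x_n, A z> = 0], as [A] is Hermitian. *)
Lemma Q_op_part_A_limit_zero (xs gs ks : nat -> X) (l : X) :
  (forall n, op_part A (xs n) (gs n)) -> (forall n, orth_proj P (gs n) (ks n)) ->
  converges_to xs vzero -> converges_to ks l -> l = vzero.
Proof.
  intros Hg Hk Hx Hl.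
  assert (Pl : P l).
  { pose proof (perp_closed_subspace (img_at S vzero)) as [_ [_ [_ Hcl]]].
    apply (Hcl ks l); [intro n; apply Hk | exact Hl]. }
  assert (Sl : S vzero l).
  { apply perp_dom_S_multivalued. intros z h Hzh.
    destruct (HDom z (ex_intro _ h Hzh)) as [kz Hkz].
    rewrite <- (inner_0l kz). apply (inner_lim ks xs l vzero z kz Hl Hx). intro n.
    rewrite (orth_proj_inner _ _ _ z (Hk n) (dom_S_perp z h Hzh)).
    apply (HAh _ _ (proj1 (Hg n))). exact Hkz. }
  apply nsq_eq0. unfold nsq. rewrite (Pl l Sl). simpl. lra.
Qed.

Lemma Kres_not_contraction_witness (N : R) : N > 0 ->
  ~ (forall s, Rabs s >= N -> forall u k, Kres s u k -> norm k <= /2 * norm u) ->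
  exists q : X * X * X * X, let '(x, v, g, k) := q in
    op_part S x v /\ op_part A x g /\ orth_proj P g k /\
    norm x <= / N /\ norm v <= 1 /\ norm k > /2.
Proof.
  intros HN Hfail. apply NNPP. intro Hno. apply Hfail. intros s Hs u k Hk.
  apply Rnot_lt_le. intro Hlt.
  assert (Hs0 : s <> 0) by (intros ->; rewrite Rabs_R0 in Hs; lra).
  assert (Hu : norm u > 0).
  { destruct (Rle_lt_or_eq_dec 0 (norm u) (norm_ge0 u)) as [|E]; [lra|].
    symmetry in E. apply norm_eq0 in E. subst u.
    rewrite (Kres_functional s _ _ _ Hs0 Hk (Kres_0 s Hs0)), norm_0 in Hlt. lra. }
  set (c := / norm u). assert (Hc : 0 < c) by (apply Rinv_0_lt_compat; lra).
  destruct (Kres_scal s u k (Creal c) Hk) as (x & f & g & Hxf & Ef & Hg & Hq).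
  destruct (op_part_exists S x f HSs (multivalued_part_closed S HSs (self_adjoint_closed S HSsa)) Hxf)
    as [v [Hv Hvf]].
  assert (Hcu : norm (vscal (Creal c) u) = 1).
  { rewrite norm_Creal, Rabs_pos_eq by lra. unfold c. field. lra. }
  destruct (S_shift_bound s x f Hxf) as [Bf Bx]. rewrite Ef, Hcu in Bf, Bx.
  apply Hno. exists (x, v, g, vscal (Creal c) k). split; [|split; [|split; [|split; [|split]]]].
  - exact Hv.
  - exact Hg.
  - exact Hq.
  - pose proof (norm_ge0 x). apply (Rmult_le_reg_l N); [lra|].
    rewrite Rinv_r by lra. nra.
  - lra.
  - rewrite norm_Creal, Rabs_pos_eq by lra.
    apply (Rmult_lt_reg_l (norm u)); [lra|]. unfold c. field_simplify; lra.
Qed.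

Hypothesis Hcomp : rel_compact (rel_comp (orth_proj P) (op_part A)) (op_part S).

Lemma Kres_contraction : exists N, N > 0 /\
  forall s, Rabs s >= N -> forall u k, Kres s u k -> norm k <= /2 * norm u.
Proof.
  apply NNPP. intro Hno.
  assert (Hbad : forall n : nat, exists q : X * X * X * X, let '(x, v, g, k) := q in
    op_part S x v /\ op_part A x g /\ orth_proj P g k /\
    norm x <= / (INR n + 1) /\ norm v <= 1 /\ norm k > /2).
  { intro n. pose proof (pos_INR n) as Hn.
    apply Kres_not_contraction_witness; [lra|]. intro Hcontr. apply Hno. exists (INR n + 1).
    split; [lra | exact Hcontr]. }
  destruct (choice _ Hbad) as [q Hq].
  set (xs := fun n => fst (fst (fst (q n)))). set (vs := fun n => snd (fst (fst (q n)))).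
  set (gs := fun n => snd (fst (q n))). set (ks := fun n => snd (q n)).
  assert (Hn : forall n, op_part S (xs n) (vs n) /\ op_part A (xs n) (gs n) /\
    orth_proj P (gs n) (ks n) /\ norm (xs n) <= / (INR n + 1) /\ norm (vs n) <= 1 /\
    norm (ks n) > /2).
  { intro n. specialize (Hq n). unfold xs, vs, gs, ks. destruct (q n) as [[[x v] g] k]. exact Hq. }
  destruct (Hcomp xs vs ks 2) as [phi [l [Hphi Hl]]].
  - intro n. apply Hn.
  - intro n. exists (gs n). split; apply Hn.
  - intro n. destruct (Hn n) as (_ & _ & _ & Bx & Bv & _).
    pose proof (inv_INR_S_le_1 n). lra.
  - assert (Hl0 : l = vzero).
    { apply (Q_op_part_A_limit_zero (fun n => xs (phi n)) (fun n => gs (phi n))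
               (fun n => ks (phi n))); auto; try (intro n; apply Hn).
      apply converges_zero_of_norm_le. intro n. destruct (Hn (phi n)) as (_ & _ & _ & Bx & _).
      pose proof (le_INR _ _ (strict_mono_ge phi Hphi n)). pose proof (pos_INR n).
      eapply Rle_trans; [exact Bx | apply Rinv_le_contravar; lra]. }
    pose proof (converges_norm_ge _ l (/2) Hl) as Hge. subst l. rewrite norm_0 in Hge.
    assert (/2 <= 0) by (apply Hge; intro n; apply Rlt_le, Hn). lra.
Qed.

(* With [K = Kres s] a contraction, [u = y - K u] is solvable, and for
   [x = (S - i s)^{-1} u] the pair [(x, y + i s x)] lies in [S + A]. *)
Lemma sum_shift_onto (s : R) : s <> 0 ->
  (forall u k, Kres s u k -> norm k <= /2 * norm u) -> shift_onto (rel_sum S A) s.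
Proof.
  intros Hs Hcontr y.
  destruct (choice (Kres s) (fun u => Kres_total s u Hs)) as [K HK].
  destruct (contraction_fixpoint (fun u => vsub y (K u))) as [u Hu].
  { intros a b. rewrite vsub_sub4, vsub_self, vsub_0l, norm_opp.
    rewrite (Kres_functional s _ _ _ Hs (Kres_sub _ _ _ _ _ (HK a) (HK b)) (HK (vsub a b))).
    apply Hcontr, HK. }
  destruct (HK u) as (x & f & g & Hxf & Ef & Hg & Hq).
  pose proof (subspace_sub S _ _ _ _ HSs Hxf (orth_proj_P_multivalued g (K u) Hq)) as Hf.
  rewrite vsub_0r in Hf.
  exists x, (vadd f (K u)). split.
  - exists (vsub f (vsub g (K u))), g. split; [exact Hf | split; [apply Hg|]].
    symmetry. apply vadd_sub_sub.
  - rewrite vsub_addl, Ef, <- Hu at 1. rewrite vadd_comm. symmetry. apply vadd_sub_cancel.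
Qed.

End Perturbation.

Theorem theorem4p4 (X : HilbertSpace) (S A : X -> X -> Prop) :
  is_subspace S -> self_adjoint S ->
  is_subspace A -> is_closed A -> hermitian A ->
  is_closed (rel_sum S A) -> hermitian (rel_sum S A) ->
  (forall x, dom S x -> dom A x) ->
  (* Q : A(0)^⊥ -> S(0)^⊥ the orthogonal projection; Q A_s is S_s-compact *)
  rel_compact (rel_comp (orth_proj (perp (img_at S vzero))) (op_part A))
              (op_part S) ->
  self_adjoint (rel_sum S A).
Proof.
  intros HSs HSsa HAs HAc HAh _ HTh HDom Hcomp.
  destruct (Kres_contraction S A HSs HSsa HAs HAc HAh HDom Hcomp) as [N [HN Hcontr]].
  apply (hermitian_shift_onto_self_adjoint _ N HTh).
  - apply sum_shift_onto; auto; [lra|]. apply Hcontr. rewrite Rabs_pos_eq; lra.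
  - apply sum_shift_onto; auto; [lra|]. apply Hcontr. rewrite Rabs_Ropp, Rabs_pos_eq; lra.
Qed.
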